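(* Let $a=\{a_k\}_{k=0}^\infty$ be a real sequence with $1=a_0>a_1\geq a_2\geq\cdots\geq a_{k-1}\geq a_k\geq\cdots$, $\lim_{k\to\infty}a_k=0$, and $\sum_{k=0}^\infty a_k=\infty$. Define $\{b_k\}_{k=0}^\infty$ by $b_0=1/a_0$ and $b_k=-\frac{1}{a_0}\sum_{j=0}^{k-1}a_{k-j}b_j$ for $k\geq1$. Then $\lim_{k\to\infty}b_k=0$.
   Context: The sequence $\{b_k\}$ gives the entries of the inverse $B=A^{-1}$ of the half-infinite lower triangular Toeplitz matrix $A$ with entries $A_{ij}=a_{i-j}$ for $i\geq j$ (and $0$ otherwise). *)

From Stdlib Require Import Reals.
From Coquelicot Require Import Coquelicot.
Open Scope R_scope.

Definition inverse_toeplitz_rec (a b : nat -> R) : Prop :=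
  b 0%nat = 1 / a 0%nat /\
  forall k : nat, (1 <= k)%nat ->
    b k = - (1 / a 0%nat) * sum_f_R0 (fun j => a (k - j)%nat * b j) (k - 1)%nat.

(* Let u_n = b_0 + ... + b_n, the n-th row sum of A^{-1}.  Since A B = I, the sequence u satisfies
   sum_{k<=n} a_{n-k} u_k = 1 for every n, and b_n = u_n - u_{n-1}, so it suffices to show
   u_n -> 0.  Subtracting consecutive rows gives u_{n+1} as a combination of u_0, ..., u_n
   with the nonnegative weights a_{n-k} - a_{n+1-k}, whence 0 <= u <= 1.  The weight of u_n
   is 1 - a_1 > 0, so if u_n is close to lam := limsup u > 0 far out, then u_{n-1} is close
   to lam as well, up to an error multiplied by 3 / (1 - a_1); on a window of length K this
   keeps u above lam / 2, so 1 >= sum_{j<=K} a_j u_{n-j} >= (lam / 2) sum_{j<=K} a_j, which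
   fails for K large since sum a diverges. *)

From Stdlib Require Import Reals Lra Lia.
From Coquelicot Require Import Coquelicot.
Open Scope R_scope.

Lemma sum_f_R0_telescope (a : nat -> R) m j : (j <= m)%nat ->
  sum_f_R0 (fun k => a (m - k)%nat - a (S m - k)%nat) j = a (m - j)%nat - a (S m).
Proof.
  induction j as [|j IH]; intros Hj.
  - simpl; rewrite Nat.sub_0_r; ring.
  - rewrite tech5, IH by lia. replace (S m - S j)%nat with (m - j)%nat by lia. ring.
Qed.

Lemma sum_f_R0_trunc (f : nat -> R) m N :
  (m <= N)%nat -> (forall k, (m < k)%nat -> f k = 0) -> sum_f_R0 f N = sum_f_R0 f m.
Proof.
  intros HmN Hz. induction HmN as [|N HmN IH]; [reflexivity|].
  simpl. rewrite IH, Hz by lia. ring.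
Qed.

Lemma sum_f_R0_ge0 (f : nat -> R) N :
  (forall k, (k <= N)%nat -> 0 <= f k) -> 0 <= sum_f_R0 f N.
Proof.
  intros Hf. rewrite <- (sum_eq_R0 (fun _ => 0) N) by reflexivity.
  exact (sum_Rle _ _ N Hf).
Qed.

Lemma sum_f_R0_le_prefix (f : nat -> R) K n : (K <= n)%nat -> (forall k, 0 <= f k) ->
  sum_f_R0 f K <= sum_f_R0 f n.
Proof.
  intros HKn Hf. induction HKn as [|n HKn IH]; simpl; [lra|].
  specialize (Hf (S n)). lra.
Qed.

Lemma antitone_ge0_of_lim0 (a : nat -> R) :
  (forall n m, (n <= m)%nat -> a m <= a n) -> is_lim_seq a 0 -> forall n, 0 <= a n.
Proof.
  intros Hanti Hlim n. destruct (Rle_or_lt 0 (a n)) as [Hn|Hn]; [exact Hn|exfalso].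
  apply is_lim_seq_spec in Hlim. destruct (Hlim (mkposreal (- a n) ltac:(lra))) as [N HN].
  specialize (HN (max N n) ltac:(lia)). specialize (Hanti n (max N n) ltac:(lia)).
  simpl in HN. rewrite Rminus_0_r in HN. apply Rabs_def2 in HN. lra.
Qed.

Lemma inverse_toeplitz_partial_sums (a b : nat -> R) : a 0%nat = 1 ->
  inverse_toeplitz_rec a b ->
  forall n, sum_f_R0 (fun k => a (n - k)%nat * sum_f_R0 b k) n = 1.
Proof.
  intros Ha0 [Hb0 Hb]. rewrite Ha0 in Hb0, Hb.
  assert (Hrow : forall m, sum_f_R0 (fun j => a (S m - j)%nat * b j) (S m) = 0).
  { intros m. rewrite tech5, Nat.sub_diag, Ha0, (Hb (S m)) by lia.
    simpl (S m - 1)%nat. rewrite Nat.sub_0_r. field. }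
  induction n as [|n IH].
  - simpl. rewrite Ha0, Hb0. field.
  - rewrite (decomp_sum _ (S n)) by lia. simpl pred.
    rewrite Nat.sub_0_r. simpl (sum_f_R0 b 0).
    rewrite (sum_eq _ (fun k => a (n - k)%nat * sum_f_R0 b k + a (S n - S k)%nat * b (S k))).
    2:{ intros k _. rewrite tech5. simpl (S n - S k)%nat. ring. }
    specialize (Hrow n). rewrite (decomp_sum _ (S n)), Nat.sub_0_r in Hrow by lia.
    rewrite plus_sum, IH. simpl pred in Hrow. lra.
Qed.

Section Toeplitz_row_sums.

Variables a u : nat -> R.
Hypothesis a0 : a 0%nat = 1.
Hypothesis a_anti : forall n m, (n <= m)%nat -> a m <= a n.
Hypothesis a_ge0 : forall n, 0 <= a n.
Hypothesis conv_u : forall n, sum_f_R0 (fun k => a (n - k)%nat * u k) n = 1.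

Lemma row_sum_succ m :
  u (S m) = sum_f_R0 (fun k => (a (m - k)%nat - a (S m - k)%nat) * u k) m.
Proof.
  pose proof (conv_u (S m)) as Hsucc. pose proof (conv_u m) as Hm.
  rewrite tech5, Nat.sub_diag, a0 in Hsucc.
  rewrite (sum_eq _ (fun k => a (m - k)%nat * u k - a (S m - k)%nat * u k)) by (intros; ring).
  rewrite minus_sum. lra.
Qed.

Lemma row_sums_bounds n : 0 <= u n <= 1.
Proof.
  assert (Hge0 : forall n, 0 <= u n).
  { intros k. induction k as [k IH] using (well_founded_induction Wf_nat.lt_wf).
    destruct k as [|m].
    - specialize (conv_u 0%nat). simpl in conv_u. rewrite a0 in conv_u. lra.
    - rewrite row_sum_succ. apply sum_f_R0_ge0. intros k Hk.
      apply Rmult_le_pos; [|apply IH; lia].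
      assert (a (S m - k)%nat <= a (m - k)%nat) by (apply a_anti; lia). lra. }
  split; [apply Hge0|].
  specialize (conv_u n). destruct n as [|m].
  - simpl in conv_u. rewrite a0 in conv_u. lra.
  - rewrite tech5, Nat.sub_diag, a0 in conv_u.
    assert (0 <= sum_f_R0 (fun k => a (S m - k)%nat * u k) m).
    { apply cond_pos_sum. intros k. apply Rmult_le_pos; auto. }
    lra.
Qed.

(* In [row_sum_succ] the weight of [u m] is [1 - a 1]; the remaining weights telescope to
   at most [a 1], and those on the indices [k < M] (where only [u k <= 1] is known) to at
   most [a (S m - M)]. *)
Lemma row_sum_succ_le L M m : 0 <= L -> (1 <= M <= m)%nat ->
  (forall k, (M <= k)%nat -> u k <= L) ->
  u (S m) <= (1 - a 1%nat) * u m + a 1%nat * L + a (S m - M)%nat.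
Proof.
  intros HL HMm HuL. destruct m as [|p]; [lia|].
  set (g := fun k => a (S p - k)%nat - a (S (S p) - k)%nat).
  set (ind := fun k => if (k <? M)%nat then 1 else 0).
  assert (Hg : forall k, (k <= S p)%nat -> 0 <= g k).
  { intros k Hk. assert (a (S (S p) - k)%nat <= a (S p - k)%nat) by (apply a_anti; lia).
    unfold g; lra. }
  assert (Hsum : sum_f_R0 g p = a 1%nat - a (S (S p))).
  { unfold g. rewrite sum_f_R0_telescope by lia.
    replace (S p - p)%nat with 1%nat by lia. reflexivity. }
  assert (Hsum_ind : sum_f_R0 (fun k => g k * ind k) p = a (S (S p) - M)%nat - a (S (S p))).
  { rewrite (sum_f_R0_trunc _ (M - 1)); try lia.
    2:{ intros k Hk. unfold ind. destruct (Nat.ltb_spec k M); [lia|ring]. }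
    rewrite (sum_eq _ g).
    2:{ intros k Hk. unfold ind. destruct (Nat.ltb_spec k M); [ring|lia]. }
    unfold g. rewrite sum_f_R0_telescope by lia.
    replace (S p - (M - 1))%nat with (S (S p) - M)%nat by lia. reflexivity. }
  assert (Hbound : sum_f_R0 (fun k => g k * u k) p <= sum_f_R0 (fun k => g k * L + g k * ind k) p).
  { apply sum_Rle. intros k Hk. pose proof (Hg k ltac:(lia)). unfold ind.
    destruct (Nat.ltb_spec k M).
    - pose proof (row_sums_bounds k). nra.
    - pose proof (HuL k ltac:(lia)). nra. }
  rewrite plus_sum, <- scal_sum, Hsum, Hsum_ind in Hbound.
  rewrite row_sum_succ, tech5.
  replace (S p - S p)%nat with 0%nat by lia. replace (S (S p) - S p)%nat with 1%nat by lia.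
  rewrite a0. change (fun k => (a (S p - k)%nat - a (S (S p) - k)%nat) * u k) with (fun k => g k * u k).
  pose proof (a_ge0 (S (S p))). pose proof (row_sums_bounds (S p)).
  assert (0 <= L * a (S (S p))) by (apply Rmult_le_pos; auto).
  lra.
Qed.

Lemma row_sums_backward lam eta M N K n : a 1%nat < 1 -> 0 <= lam -> 0 <= eta ->
  (1 <= M)%nat -> (M + N + K <= n)%nat ->
  (forall k, (M <= k)%nat -> u k <= lam + eta) ->
  (forall k, (N <= k)%nat -> a k <= eta) ->
  lam - eta <= u n ->
  forall j, (j <= K)%nat -> lam - (3 / (1 - a 1%nat)) ^ j * eta <= u (n - j)%nat.
Proof.
  intros Ha1 Hlam Heta HM Hn HuL HaN Hun j. set (c := 1 - a 1%nat).
  assert (Hc : 0 < c <= 1) by (pose proof (a_ge0 1); unfold c; lra).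
  induction j as [|j IH]; intros Hj.
  - rewrite Nat.sub_0_r. simpl. lra.
  - specialize (IH ltac:(lia)).
    pose proof (row_sum_succ_le (lam + eta) M (n - S j) ltac:(lra) ltac:(lia) HuL) as Hstep.
    replace (S (n - S j)) with (n - j)%nat in Hstep by lia.
    pose proof (HaN (n - j - M)%nat ltac:(lia)).
    assert (Hqj : 1 <= (3 / c) ^ j).
    { apply pow_R1_Rle. apply (Rmult_le_reg_l c); [lra|].
      replace (c * (3 / c)) with 3 by (field; lra). lra. }
    set (Q := (3 / c) ^ j * eta) in *.
    assert (eta <= Q) by (unfold Q; nra).
    assert (c * u (n - S j)%nat >= c * lam - 3 * Q) by (pose proof (a_ge0 1); unfold c in *; nra).
    replace ((3 / c) ^ S j * eta) with (3 * Q / c) by (unfold Q; simpl; field; lra).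
    apply (Rmult_le_reg_l c); [lra|].
    replace (c * (lam - 3 * Q / c)) with (c * lam - 3 * Q) by (field; lra). lra.
Qed.

Lemma row_sums_window K n : (K <= n)%nat ->
  sum_f_R0 (fun j => a j * u (n - j)%nat) K <= 1.
Proof.
  intros HKn. rewrite <- (conv_u n).
  apply Rle_trans with (sum_f_R0 (fun j => a j * u (n - j)%nat) n).
  - apply sum_f_R0_le_prefix; [exact HKn|].
    intros j. apply Rmult_le_pos; [apply a_ge0|apply row_sums_bounds].
  - rewrite <- sum_f_R0_skip. apply Req_le, sum_eq. intros k Hk.
    do 2 f_equal. lia.
Qed.

Lemma row_sums_LimSup_le0 (lam : R) : a 1%nat < 1 -> is_lim_seq a 0 ->
  is_lim_seq (sum_n a) p_infty -> is_LimSup_seq u lam -> lam <= 0.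
Proof.
  intros Ha1 Hlim Hdiv Hsup. destruct (Rle_or_lt lam 0) as [|Hlam]; [assumption|exfalso].
  set (q := 3 / (1 - a 1%nat)).
  assert (Hq : 1 <= q).
  { pose proof (a_ge0 1). apply (Rmult_le_reg_l (1 - a 1%nat)); [lra|].
    unfold q. replace ((1 - a 1%nat) * (3 / (1 - a 1%nat))) with 3 by (field; lra). lra. }
  apply is_lim_seq_spec in Hdiv. destruct (Hdiv (4 / lam)) as [K HK].
  specialize (HK K (le_n K)). rewrite sum_n_Reals in HK.
  assert (HqK : 0 < q ^ K) by (apply pow_lt; lra).
  set (eta := lam / 2 / q ^ K).
  assert (Heta : 0 < eta) by (unfold eta; apply Rdiv_lt_0_compat; lra).
  destruct (Hsup (mkposreal eta Heta)) as [Hoften [M0 HM0]]. simpl in Hoften, HM0.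
  apply is_lim_seq_spec in Hlim. destruct (Hlim (mkposreal eta Heta)) as [N HN].
  simpl in HN.
  destruct (Hoften (max 1 M0 + N + K)%nat) as [n [Hn Hun]].
  assert (Hwindow : forall j, (j <= K)%nat -> lam / 2 <= u (n - j)%nat).
  { intros j Hj.
    assert (q ^ j * eta <= lam / 2).
    { apply Rle_trans with (q ^ K * eta).
      - apply Rmult_le_compat_r; [lra|]. apply Rle_pow; assumption.
      - unfold eta. right. field. lra. }
    enough (lam - q ^ j * eta <= u (n - j)%nat) by lra.
    apply (row_sums_backward lam eta (max 1 M0) N K n); try lia; try lra.
    - intros k Hk. specialize (HM0 k ltac:(lia)). lra.
    - intros k Hk. specialize (HN k Hk). rewrite Rminus_0_r in HN.
      apply Rabs_def2 in HN. lra. }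
  assert (Hlow : sum_f_R0 (fun j => a j * (lam / 2)) K
                 <= sum_f_R0 (fun j => a j * u (n - j)%nat) K).
  { apply sum_Rle. intros j Hj. apply Rmult_le_compat_l; auto. }
  rewrite <- scal_sum in Hlow. pose proof (row_sums_window K n ltac:(lia)).
  assert (lam / 2 * (4 / lam) < lam / 2 * sum_f_R0 a K) by (apply Rmult_lt_compat_l; lra).
  replace (lam / 2 * (4 / lam)) with 2 in * by (field; lra).
  lra.
Qed.

Lemma row_sums_lim0 : a 1%nat < 1 -> is_lim_seq a 0 ->
  is_lim_seq (sum_n a) p_infty -> is_lim_seq u 0.
Proof.
  intros Ha1 Hlim Hdiv. destruct (ex_LimSup_seq u) as [[lam| |] Hsup].
  - pose proof (row_sums_LimSup_le0 lam Ha1 Hlim Hdiv Hsup) as Hlam.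
    apply is_lim_seq_spec. intros eps. destruct (Hsup eps) as [_ [N HN]].
    exists N. intros n Hn. specialize (HN n Hn). pose proof (row_sums_bounds n).
    rewrite Rminus_0_r, Rabs_pos_eq by lra. pose proof (cond_pos eps). lra.
  - destruct (Hsup 2 0%nat) as [n [_ Hn]]. pose proof (row_sums_bounds n). lra.
  - destruct (Hsup 0) as [N HN]. specialize (HN N (le_n N)).
    pose proof (row_sums_bounds N). lra.
Qed.

End Toeplitz_row_sums.

Theorem corollary1 (a b : nat -> R) :
  a 0%nat = 1 ->
  a 0%nat > a 1%nat ->
  (forall k : nat, (1 <= k)%nat -> a (S k) <= a k) ->
  is_lim_seq a 0 ->
  is_lim_seq (sum_n a) p_infty ->
  inverse_toeplitz_rec a b ->
  is_lim_seq b 0.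
Proof.
  intros Ha0 Ha1 Hdec Hlim Hdiv Hrec.
  assert (Hdecr : Un_decreasing a) by (intros [|k]; [lra|apply Hdec; lia]).
  pose proof (fun n m => decreasing_prop a n m Hdecr) as Hanti.
  pose proof (antitone_ge0_of_lim0 a Hanti Hlim) as Hge0.
  set (u := sum_f_R0 b).
  assert (Hu : is_lim_seq u 0).
  { apply (row_sums_lim0 a u Ha0 Hanti Hge0); try lra; try assumption.
    exact (inverse_toeplitz_partial_sums a b Ha0 Hrec). }
  apply is_lim_seq_incr_1.
  apply (is_lim_seq_ext (fun n => u (S n) - u n)); [intros n; unfold u; rewrite tech5; ring|].
  replace (Finite 0) with (Finite (0 - 0)) by (f_equal; ring).
  apply is_lim_seq_minus'; [apply (is_lim_seq_incr_1 u 0)|]; assumption.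
Qed.
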